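(* Let $\alpha\ge1$, let $m_0:[0,\infty)\to[0,\infty)$ be bounded, Lipschitz and non-decreasing with $m_0(0)=0$, let $h_\rho,h_t>0$ satisfy (CFL), let $M_j^n$ be given by the scheme (M), and let $U_j^n=\frac{M_j^n-M_{j-1}^n}{h_\rho}$ for $j\ge1$. Then $U_j^n\ge0$ for all $n,j$ and $$\sup_{j}U_j^{n+1}\le\sup_jU_j^n\qquad\text{for all }n\ge0.$$
   Context: (CFL): $\frac{h_t}{h_\rho}\le\frac{1}{2\alpha\|(m_0)_\rho\|_\infty^{\alpha-1}\|m_0\|_\infty}$. Scheme (M): with $t_n=nh_t$, $\rho_j=jh_\rho$, $H(s)=\big(\min\{s_+,\|(m_0)_\rho\|_\infty\}\big)^\alpha$, set $M_j^0=m_0(\rho_j)$ ($j\ge0$), $M_0^n=0$ ($n>0$), and $M_j^{n+1}=M_j^n\big/\big(1+h_tH\big(\frac{M_j^n-M_{j-1}^n}{h_\rho}\big)\big)$ for $j\ge1$, $n\ge0$. *)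

From HB Require Import structures.
From mathcomp Require Import all_boot all_order all_algebra.
From mathcomp Require Import all_classical all_reals all_analysis.
Set Implicit Arguments. Unset Strict Implicit. Unset Printing Implicit Defensive.
Import Order.TTheory GRing.Theory Num.Theory.
Local Open Scope classical_set_scope.
Local Open Scope ring_scope.

Definition supnorm {R : realType} (m0 : R -> R) : R :=
  sup [set `|m0 x| | x in [set x : R | 0 <= x]].

(* ||(m0)_rho||_oo : for a Lipschitz function this is its best Lipschitz
   constant on [0,+oo), i.e. the sup of the difference quotients. *)
Definition derivnorm {R : realType} (m0 : R -> R) : R :=
  sup [set q : R | exists x y : R,
         [/\ 0 <= x, x < y & q = `|m0 y - m0 x| / (y - x)]].

Definition Hfun {R : realType} (alpha : R) (m0 : R -> R) (s : R) : R :=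
  (Num.min (Num.max s 0) (derivnorm m0)) `^ alpha.

Fixpoint Mscheme {R : realType} (alpha : R) (m0 : R -> R) (ht hr : R)
    (n j : nat) : R :=
  match n with
  | 0%N => m0 (j%:R * hr)
  | n'.+1 =>
      match j with
      | 0%N => 0
      | j'.+1 =>
          Mscheme alpha m0 ht hr n' j /
          (1 + ht * Hfun alpha m0
                ((Mscheme alpha m0 ht hr n' j - Mscheme alpha m0 ht hr n' j') / hr))
      end
  end.

(* U_j^n = (M_j^n - M_{j-1}^n)/h_rho, meaningful for j >= 1 *)
Definition Uscheme {R : realType} (alpha : R) (m0 : R -> R) (ht hr : R)
    (n j : nat) : R :=
  (Mscheme alpha m0 ht hr n j - Mscheme alpha m0 ht hr n j.-1) / hr.

From HB Require Import structures.
From mathcomp Require Import all_boot all_order all_algebra.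
From mathcomp Require Import all_classical all_reals all_analysis.
From mathcomp Require Import ring lra.
Import Order.TTheory GRing.Theory Num.Theory.
Local Open Scope classical_set_scope.
Local Open Scope ring_scope.

(* Write M_j^{n+1} = M_j^n / (1 + h_t H(U_j^n)) for every j (for j = 0 both
   sides vanish, and U_0^n = 0).  Then U_{j}^{n+1} is a function of
   a = M_{j-1}^n, u = U_j^n, v = U_{j-1}^n only:
     U_j^{n+1} = ((a + h_rho u)/(1 + h_t H u) - a/(1 + h_t H v)) / h_rho.
   Since H is nondecreasing and c-Lipschitz on [0,oo) with
   c = alpha ||m0'||^(alpha-1) (mean value theorem for x^alpha), and
   0 <= a <= ||m0||, the CFL condition 2 c ||m0|| h_t <= h_rho gives
   0 <= U_j^{n+1} <= max(U_j^n, U_{j-1}^n)  ([cell_update]).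
   The file proves: the Lipschitz bound for x^alpha and for H, the algebraic
   one-cell estimate, the invariants 0 <= M_j^n <= ||m0|| of the scheme, and
   finally positivity of U by induction on n and the bound on the suprema. *)

Section PowerLipschitz.
Import numFieldNormedType.Exports.

(* x ^ a is (a D^(a-1))-Lipschitz on [0, D] when a >= 1 (mean value theorem). *)
Lemma powR_sub_le {R : realType} {a D x y : R} :
  1 <= a -> 0 <= y -> y <= x -> x <= D ->
  x `^ a - y `^ a <= a * D `^ (a - 1) * (x - y).
Proof.
move=> a1 y0 yx xD.
have a0 : 0 < a by apply: lt_le_trans a1.
have x0 : 0 <= x by apply: le_trans yx.
have powD : forall c, 0 <= c -> c <= D -> c `^ (a - 1) <= D `^ (a - 1).
  move=> c c0 cD; apply: ge0_ler_powR; rewrite ?nnegrE ?subr_ge0 //.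
  exact: le_trans cD.
have [->|yn0] := eqVneq y 0.
  (* x^a = x * x^(a-1) <= x * D^(a-1) <= a * D^(a-1) * x *)
  rewrite powR0 ?gt_eqF // !subr0 -mulr_powRB1 //.
  have xpow : x * x `^ (a - 1) <= x * D `^ (a - 1) by rewrite ler_wpM2l ?powD.
  have xD0 : 0 <= x * D `^ (a - 1) by rewrite mulr_ge0 ?powR_ge0.
  nra.
have [<-|xny] := eqVneq x y; first by rewrite !subrr mulr0.
have ypos : 0 < y by rewrite lt_neqAle eq_sym yn0.
have yltx : y < x by rewrite lt_neqAle eq_sym xny.
have der : forall c, c \in `]y, x[ ->
    is_derive c 1 (fun z : R => z `^ a) (a * c `^ (a - 1)).
  move=> c; rewrite in_itv /= => /andP[yc _]; apply: is_derive1_powR.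
  exact: lt_trans yc.
have cont : {within `[y, x]%classic, continuous (fun z : R => z `^ a)}.
  apply: derivable_within_continuous => c; rewrite in_itv /= => /andP[yc _].
  by apply: derivable_powR; rewrite in_itv /= andbT (lt_le_trans ypos).
have [c /[!in_itv] /= /andP[yc cx] ->] := MVT yltx der cont.
rewrite ler_wpM2r ?subr_ge0 ?(ltW yltx) // ler_pM2l //.
by rewrite powD ?ltW // (lt_trans ypos, lt_le_trans cx).
Qed.

End PowerLipschitz.

(* The flux H is nondecreasing and (alpha ||m0'||^(alpha-1))-Lipschitz on
   [0, oo): clipping to [0, ||m0'||] is 1-Lipschitz, then apply
   [powR_sub_le]. *)
Lemma Hfun_monotone_lipschitz {R : realType} {alpha : R} {m0 : R -> R} {u v : R} :
  1 <= alpha -> 0 <= derivnorm m0 -> 0 <= v -> v <= u ->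
  0 <= Hfun alpha m0 u - Hfun alpha m0 v <=
    alpha * derivnorm m0 `^ (alpha - 1) * (u - v).
Proof.
move=> a1 D0 v0 vu.
rewrite /Hfun (max_l (le_trans v0 vu)) (max_l v0).
set D := derivnorm m0.
have mv0 : 0 <= Num.min v D by rewrite le_min v0 D0.
have mvu : Num.min v D <= Num.min u D by rewrite le_min !ge_min vu lexx orbT.
have muD : Num.min u D <= D by rewrite ge_min lexx orbT.
have clip : Num.min u D - Num.min v D <= u - v.
  by case: (leP u D) => uD; case: (leP v D) => vD; lra.
apply/andP; split.
  rewrite subr_ge0 ge0_ler_powR ?nnegrE ?(le_trans ler01 a1) //.
  exact: le_trans mvu.
apply: (le_trans (powR_sub_le a1 mv0 mvu muD)); apply: ler_wpM2l clip.
by rewrite mulr_ge0 ?powR_ge0 // (le_trans ler01).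
Qed.

Section CellUpdate.

(* The updated gradient has the form N / (X Y h_rho) with numerator
   N = h_rho u Y + a h_t (p - q), X = 1 + h_t q, Y = 1 + h_t p, where
   u, v are the old gradients, p = H v, q = H u and a <= S is the old mass. *)
Context {R : realFieldType} {a u v p q S c hr ht X Y : R}.
Hypotheses (hr0 : 0 < hr) (ht0 : 0 < ht) (a0 : 0 <= a) (aS : a <= S).
Hypotheses (u0 : 0 <= u) (v0 : 0 <= v) (X1 : 1 <= X) (Y1 : 1 <= Y).
Hypothesis cfl : 2 * c * S * ht <= hr.

(* Increasing gradient: the mass loss is the larger one, but only by
   h_t S c (u - v) <= h_rho (u - v) / 2, so N stays nonnegative. *)
Lemma cell_numerator_up :
  v <= u -> 0 <= q - p <= c * (u - v) ->
  0 <= hr * u * Y + a * ht * (p - q) <= u * (X * Y * hr).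
Proof.
move=> vu /andP[qp0 qpc].
have loss : a * (q - p) <= S * (c * (u - v)) by apply: ler_pM.
have loss0 : 0 <= a * (q - p) by apply: mulr_ge0.
have huY : hr * u <= hr * u * Y by rewrite ler_peMr // mulr_ge0 // ltW.
have huYX : hr * u * Y <= hr * u * Y * X.
  by rewrite ler_peMr // !mulr_ge0 // ?(ltW hr0) ?(le_trans ler01 Y1).
have htloss : ht * (a * (q - p)) <= ht * (S * (c * (u - v))).
  by rewrite ler_wpM2l // ltW.
have htloss0 : 0 <= ht * (a * (q - p)) by rewrite mulr_ge0 // ltW.
have hrv0 : 0 <= hr * v by rewrite mulr_ge0 // ltW.
have cflx : 2 * c * S * ht * (u - v) <= hr * (u - v).
  by rewrite ler_wpM2r // subr_ge0.
apply/andP; split; nra.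
Qed.

(* Decreasing gradient: the extra mass lost on the left cell adds at most
   h_rho (v - u) / 2 to N, which is absorbed by h_rho (v - u) Y. *)
Lemma cell_numerator_down :
  u <= v -> 0 <= p - q <= c * (v - u) ->
  0 <= hr * u * Y + a * ht * (p - q) <= v * (X * Y * hr).
Proof.
move=> uv /andP[pq0 pqc].
have gain : a * (p - q) <= S * (c * (v - u)) by apply: ler_pM.
have gain0 : 0 <= a * (p - q) by apply: mulr_ge0.
have huY : hr * u <= hr * u * Y by rewrite ler_peMr // mulr_ge0 // ltW.
have htgain : ht * (a * (p - q)) <= ht * (S * (c * (v - u))).
  by rewrite ler_wpM2l // ltW.
have htgain0 : 0 <= ht * (a * (p - q)) by rewrite mulr_ge0 // ltW.
have hru0 : 0 <= hr * u by rewrite mulr_ge0 // ltW.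
have hrvu0 : 0 <= hr * (v - u) by rewrite mulr_ge0 ?subr_ge0 // ltW.
have cflx : 2 * c * S * ht * (v - u) <= hr * (v - u).
  by rewrite ler_wpM2r // subr_ge0.
have hvYX : hr * v * Y <= hr * v * Y * X.
  by rewrite ler_peMr // !mulr_ge0 // ?(ltW hr0) ?(le_trans ler01 Y1).
have hvuY : hr * (v - u) <= hr * (v - u) * Y.
  by rewrite ler_peMr // mulr_ge0 ?(ltW hr0) ?subr_ge0.
apply/andP; split; nra.
Qed.

End CellUpdate.

Lemma cell_update {R : realFieldType} (a u v p q S c hr ht : R) :
  0 < hr -> 0 < ht -> 0 <= a <= S -> 0 <= u -> 0 <= v ->
  0 <= p -> 0 <= q -> 2 * c * S * ht <= hr ->
  (v <= u -> 0 <= q - p <= c * (u - v)) ->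
  (u <= v -> 0 <= p - q <= c * (v - u)) ->
  0 <= ((a + hr * u) / (1 + ht * q) - a / (1 + ht * p)) / hr <= Num.max u v.
Proof.
move=> hr0 ht0 /andP[a0 aS] u0 v0 p0 q0 cfl Hup Hdown.
have X1 : 1 <= 1 + ht * q by rewrite lerDl mulr_ge0 // ltW.
have Y1 : 1 <= 1 + ht * p by rewrite lerDl mulr_ge0 // ltW.
set X := 1 + ht * q in X1 *; set Y := 1 + ht * p in Y1 *.
have X0 : 0 < X by apply: lt_le_trans X1.
have Y0 : 0 < Y by apply: lt_le_trans Y1.
have -> : ((a + hr * u) / X - a / Y) / hr =
    (hr * u * Y + a * ht * (p - q)) / (X * Y * hr).
  by rewrite /X /Y in X0 Y0 *; field; rewrite !gt_eqF.
have XYh : 0 < X * Y * hr by rewrite !mulr_gt0.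
suff /andP[N0 Nle] : 0 <= hr * u * Y + a * ht * (p - q) <= Num.max u v * (X * Y * hr).
  by rewrite divr_ge0 ?(ltW XYh) //= ler_pdivrMr.
case: (leP v u) => [vu|/ltW uv].
- exact: cell_numerator_up hr0 ht0 a0 aS u0 v0 X1 Y1 cfl vu (Hup vu).
- exact: cell_numerator_down hr0 ht0 a0 aS u0 v0 X1 Y1 cfl uv (Hdown uv).
Qed.

Section SchemeInvariants.
Context {R : realType} {alpha : R} {m0 : R -> R} {ht hr : R}.
Hypothesis alpha_ge1 : 1 <= alpha.
Hypothesis m0_bounded : exists C : R, forall x, 0 <= x -> `|m0 x| <= C.
Hypothesis m0_lipschitz :
  exists L : R, forall x y, 0 <= x -> 0 <= y -> `|m0 x - m0 y| <= L * `|x - y|.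
Hypothesis m0_mono : forall x y, 0 <= x -> x <= y -> m0 x <= m0 y.
Hypothesis m0_at0 : m0 0 = 0.
Hypotheses (hr_gt0 : 0 < hr) (ht_gt0 : 0 < ht).
Hypothesis cfl : 2 * alpha * (derivnorm m0 `^ (alpha - 1)) * supnorm m0 * ht <= hr.

Local Notation M := (Mscheme alpha m0 ht hr).
Local Notation U := (Uscheme alpha m0 ht hr).
Local Notation H := (Hfun alpha m0).

(* The difference quotients of a Lipschitz m0 form a bounded set containing
   the nonnegative quotient on [0, 1], so their supremum is nonnegative. *)
Lemma derivnorm_ge0 : 0 <= derivnorm m0.
Proof.
have [L HL] := m0_lipschitz.
set Q := [set q : R | exists x y : R,
  [/\ 0 <= x, x < y & q = `|m0 y - m0 x| / (y - x)]].
have Q01 : Q (`|m0 1 - m0 0| / (1 - 0)) by exists 0, 1.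
have supQ : has_sup Q.
  split; first by exists (`|m0 1 - m0 0| / (1 - 0)).
  exists L => _ [x [y [x0 xy ->]]].
  have yx0 : 0 < y - x by rewrite subr_gt0.
  rewrite ler_pdivrMr // -[X in L * X](gtr0_norm yx0).
  by apply: HL; rewrite // (le_trans x0 (ltW xy)).
have Q01_le : `|m0 1 - m0 0| / (1 - 0) <= derivnorm m0.
  exact: sup_upper_bound supQ _ Q01.
by apply: le_trans Q01_le; rewrite divr_ge0 // subr_ge0.
Qed.

Lemma m0_le_supnorm x : 0 <= x -> m0 x <= supnorm m0.
Proof.
move=> x0; have [C HC] := m0_bounded.
have supm0 : has_sup [set `|m0 x| | x in [set x : R | 0 <= x]].
  split; first by exists `|m0 0|; exists 0; rewrite /= ?lexx.
  by exists C => _ [y y0 <-]; apply: HC.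
apply: le_trans (ler_norm _) _.
exact: sup_upper_bound supm0 _ (ex_intro2 _ _ x x0 erefl).
Qed.

Lemma Mscheme0 n : M n 0 = 0.
Proof. by case: n => //=; rewrite mul0r m0_at0. Qed.

Lemma Uscheme0 n : U n 0 = 0.
Proof. by rewrite /Uscheme subrr mul0r. Qed.

Lemma Mscheme_update n j : M n.+1 j = M n j / (1 + ht * H (U n j)).
Proof. by case: j => [|j] //=; rewrite Mscheme0 mul0r. Qed.

Lemma Mscheme_succ n j : M n j.+1 = M n j + hr * U n j.+1.
Proof. by rewrite /Uscheme mulrC divfK ?gt_eqF // addrC subrK. Qed.

(* Invariant of the scheme: 0 <= M_j^n <= ||m0||_oo, because each update
   divides by a factor at least 1. *)
Lemma Mscheme_bounds n j : 0 <= M n j <= supnorm m0.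
Proof.
elim: n j => [|n IH] j.
  have jh0 : 0 <= j%:R * hr by rewrite mulr_ge0 // ltW.
  by rewrite /= m0_le_supnorm // andbT -m0_at0 m0_mono.
have /andP[M0 MS] := IH j.
have X1 : 1 <= 1 + ht * H (U n j) by rewrite lerDl mulr_ge0 ?powR_ge0 // ltW.
have X0 : 0 < 1 + ht * H (U n j) by apply: lt_le_trans X1.
rewrite Mscheme_update divr_ge0 ?(ltW X0) //=.
by rewrite (le_trans _ MS) // ler_pdivrMr // ler_peMr.
Qed.

Lemma Uscheme_update n : (forall k, 0 <= U n k) ->
  forall j, 0 <= U n.+1 j.+1 <= Num.max (U n j.+1) (U n j).
Proof.
move=> U0 j.
rewrite [U n.+1 j.+1]/Uscheme !Mscheme_update Mscheme_succ /=.
have Hlip u v : 0 <= v -> v <= u ->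
    0 <= H u - H v <= alpha * derivnorm m0 `^ (alpha - 1) * (u - v).
  exact: Hfun_monotone_lipschitz alpha_ge1 derivnorm_ge0.
apply: (cell_update _ _ _ _ _ (supnorm m0) (alpha * derivnorm m0 `^ (alpha - 1)))
  => //; rewrite ?powR_ge0 ?U0 ?Mscheme_bounds //.
- by rewrite !mulrA.
- exact: Hlip (U0 _).
- exact: Hlip (U0 _).
Qed.

(* Nonnegativity of the gradients: m0 is nondecreasing, and the update
   preserves the sign. *)
Lemma Uscheme_ge0 n j : 0 <= U n j.
Proof.
elim: n j => [|n IH] j.
  rewrite divr_ge0 ?subr_ge0 ?(ltW hr_gt0) // m0_mono ?mulr_ge0 ?(ltW hr_gt0) //.
  by rewrite ler_wpM2r ?(ltW hr_gt0) // ler_nat leq_pred.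
by case: j => [|j]; [rewrite Uscheme0 | case/andP: (Uscheme_update _ IH j)].
Qed.

Lemma Uscheme_le_sup n k :
  ((U n k)%:E <= ereal_sup [set (U n j)%:E | j in [set j : nat | (0 < j)%N]])%E.
Proof.
apply: le_ereal_sup_tmp; exists (U n (maxn k 1))%:E.
  by exists (maxn k 1); rewrite //= leq_max orbT.
case: k => [|k]; last by rewrite (maxn_idPl _).
by rewrite Uscheme0 lee_fin Uscheme_ge0.
Qed.

End SchemeInvariants.

Theorem mainTheorem11 (R : realType) (alpha : R) (m0 : R -> R) (ht hr : R) :
  1 <= alpha ->
  (exists C : R, forall x, 0 <= x -> `|m0 x| <= C) ->
  (exists L : R, forall x y, 0 <= x -> 0 <= y -> `|m0 x - m0 y| <= L * `|x - y|) ->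
  (forall x y, 0 <= x -> x <= y -> m0 x <= m0 y) ->
  (forall x, 0 <= x -> 0 <= m0 x) ->
  m0 0 = 0 ->
  0 < hr -> 0 < ht ->
  (* (CFL), multiplied out: h_t/h_rho <= 1/(2 alpha ||m0'||^(alpha-1) ||m0||) *)
  2 * alpha * (derivnorm m0 `^ (alpha - 1)) * supnorm m0 * ht <= hr ->
  (forall n j : nat, (0 < j)%N -> 0 <= Uscheme alpha m0 ht hr n j) /\
  (forall n : nat,
     (ereal_sup [set (Uscheme alpha m0 ht hr n.+1 j)%:E | j in [set j : nat | (0 < j)%N]]
      <= ereal_sup [set (Uscheme alpha m0 ht hr n j)%:E | j in [set j : nat | (0 < j)%N]])%E).
Proof.
move=> a1 bnd lip mono _ m00 hr0 ht0 cfl.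
have U_ge0 := Uscheme_ge0 a1 bnd lip mono m00 hr0 ht0 cfl.
have U_le_sup := Uscheme_le_sup a1 bnd lip mono m00 hr0 ht0 cfl.
split=> [n j _|n]; first exact: U_ge0.
apply: ge_ereal_sup => _ [[//|j] _ <-].
have /andP[_] := Uscheme_update a1 bnd lip mono m00 hr0 ht0 cfl n (U_ge0 n) j.
rewrite le_max => /orP[le|le].
- by apply: (le_trans _ (U_le_sup n j.+1)); rewrite lee_fin.
- by apply: (le_trans _ (U_le_sup n j)); rewrite lee_fin.
Qed.
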